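(* Let $T:X\to Y$ be an injective linear operator between Archimedean vector lattices. If $T$ satisfies condition $(\beta)$, then the inverse operator $T^{-1}:TX\to X$ is disjointness preserving, i.e. whenever $y_1,y_2\in TX$ satisfy $|y_1|\wedge|y_2|=0$ in $Y$, then $|T^{-1}y_1|\wedge|T^{-1}y_2|=0$ in $X$.
   Context: All vector lattices are Archimedean. For a subset $A$ of a vector lattice $X$, $A^d=\{x\in X: |x|\wedge|a|=0 \text{ for all } a\in A\}$ and $A^{dd}=(A^d)^d$. For $a,b\in X$ we write $a\lhd b$ if $\{a\}^{dd}\subseteq\{b\}^{dd}$. A linear operator $T:X\to Y$ satisfies condition $(\beta)$ if $Ta\lhd Tb$ in $Y$ whenever $a\lhd b$ in $X$. A linear operator is disjointness preserving if it maps disjoint elements to disjoint elements. *)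

From HB Require Import structures.
From mathcomp Require Import all_boot all_order all_algebra.
From mathcomp Require Import reals.
Set Implicit Arguments. Unset Strict Implicit. Unset Printing Implicit Defensive.
Import Order.TTheory GRing.Theory Num.Theory.
Local Open Scope ring_scope.

Record vlattice (R : realType) (V : lmodType R) := VLattice {
  vle : V -> V -> Prop;
  vsup : V -> V -> V;
  vle_refl : forall x, vle x x;
  vle_anti : forall x y, vle x y -> vle y x -> x = y;
  vle_trans : forall x y z, vle x y -> vle y z -> vle x z;
  vsup_ubl : forall x y, vle x (vsup x y);
  vsup_ubr : forall x y, vle y (vsup x y);
  vsup_lub : forall x y z, vle x z -> vle y z -> vle (vsup x y) z;
  vle_add : forall x y z, vle x y -> vle (x + z) (y + z);
  vle_scale : forall (a : R) x y, 0 <= a -> vle x y -> vle (a *: x) (a *: y)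
}.

Section VL.
Variables (R : realType) (V : lmodType R) (L : vlattice V).

Definition archimedean : Prop :=
  forall x y : V, vle L 0 x -> (forall n : nat, vle L (n%:R *: x) y) -> x = 0.

Definition vinf (x y : V) : V := - vsup L (- x) (- y).
Definition vabs (x : V) : V := vsup L x (- x).
Definition vdisj (x y : V) : Prop := vinf (vabs x) (vabs y) = 0.
Definition dcomp (A : V -> Prop) : V -> Prop :=
  fun x => forall a, A a -> vdisj x a.
Definition ddcomp (A : V -> Prop) : V -> Prop := dcomp (dcomp A).
Definition vlhd (a b : V) : Prop :=
  forall x, ddcomp (fun z => z = a) x -> ddcomp (fun z => z = b) x.
End VL.

Definition cond_beta (R : realType) (X Y : lmodType R)
  (LX : vlattice X) (LY : vlattice Y) (T : X -> Y) : Prop :=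
  forall a b : X, vlhd LX a b -> vlhd LY (T a) (T b).

(* Put w := |x1| /\ |x2|. Since 0 <= w <= |xi|, every element disjoint from
   xi is disjoint from w, so w lies in the band {xi}^dd, i.e. w <| xi.
   By (beta), Tw lies in both {Tx1}^dd and {Tx2}^dd; these bands of disjoint
   elements meet only in 0, hence Tw = 0 and w = 0 by injectivity. *)
From HB Require Import structures.
From mathcomp Require Import all_boot all_order all_algebra.
From mathcomp Require Import reals.
Import Order.TTheory GRing.Theory Num.Theory.
Local Open Scope ring_scope.
Set Implicit Arguments. Unset Strict Implicit.

Section VectorLattice.
Variables (R : realType) (V : lmodType R) (L : vlattice V).
Local Notation le := (vle L).
Local Notation sup := (vsup L).
Local Notation inf := (vinf L).
Local Notation abs := (vabs L).
Local Notation disj := (vdisj L).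
Local Notation band1 b := (ddcomp L (fun z => z = b)).

Lemma vsupC x y : sup x y = sup y x.
Proof. by apply: vle_anti; apply: vsup_lub; (apply: vsup_ubl || apply: vsup_ubr). Qed.

Lemma vle_opp x y : le x y -> le (- y) (- x).
Proof.
move=> le_xy; have := vle_add (- x - y) le_xy.
by rewrite addrA subrr add0r addrC -addrA addNr addr0.
Qed.

Lemma vle_oppr x y : le (- y) (- x) -> le x y.
Proof. by move/vle_opp; rewrite !opprK. Qed.

Lemma vinf_lel x y : le (inf x y) x.
Proof. by apply: vle_oppr; rewrite /vinf opprK; apply: vsup_ubl. Qed.

Lemma vinf_ler x y : le (inf x y) y.
Proof. by apply: vle_oppr; rewrite /vinf opprK; apply: vsup_ubr. Qed.

Lemma vinf_glb x y z : le z x -> le z y -> le z (inf x y).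
Proof.
move=> le_zx le_zy; apply: vle_oppr; rewrite /vinf opprK.
by apply: vsup_lub; apply: vle_opp.
Qed.

Lemma vinfC x y : inf x y = inf y x.
Proof. by rewrite /vinf vsupC. Qed.

Lemma vinfxx x : inf x x = x.
Proof. by apply: vle_anti; [apply: vinf_lel | apply: vinf_glb; apply: vle_refl]. Qed.

(* From -x <= |x| and x <= |x| we get 0 <= 2|x|; then scale by 1/2. *)
Lemma vabs_ge0 x : le 0 (abs x).
Proof.
have le_2abs : le 0 (abs x + abs x).
  have le_x : le (x + abs x) (abs x + abs x) by apply: vle_add; apply: vsup_ubl.
  have le_Nx : le (- x + x) (abs x + x) by apply: vle_add; apply: vsup_ubr.
  by rewrite addNr addrC in le_Nx; apply: vle_trans le_Nx le_x.
have half_ge0 : 0 <= 1 / 2 :> R by rewrite divr_ge0 ?ler01 ?ler0n.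
have := vle_scale half_ge0 le_2abs.
by rewrite scaler0 scalerDr -scalerDl -splitr scale1r.
Qed.

Lemma vabs_id w : le 0 w -> abs w = w.
Proof.
move=> w_ge0; apply: vle_anti; last exact: vsup_ubl.
apply: vsup_lub; first exact: vle_refl.
have le_Nw0 : le (- w) 0 by rewrite -oppr0; exact: vle_opp.
exact: vle_trans le_Nw0 w_ge0.
Qed.

Lemma vabs_eq0 z : abs z = 0 -> z = 0.
Proof.
move=> abs_z0; apply: vle_anti; first by rewrite -abs_z0; apply: vsup_ubl.
by apply: vle_oppr; rewrite oppr0 -abs_z0; apply: vsup_ubr.
Qed.

Lemma vdisjC x y : disj x y -> disj y x.
Proof. by rewrite /vdisj vinfC. Qed.

Lemma vdisjxx z : disj z z -> z = 0.
Proof. by rewrite /vdisj vinfxx; apply: vabs_eq0. Qed.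

Lemma vdisj_le x y w : le 0 w -> le w (abs y) -> disj x y -> disj x w.
Proof.
rewrite /vdisj => w_ge0 le_wy disj_xy; rewrite (vabs_id w_ge0).
apply: vle_anti; last by apply: vinf_glb => //; apply: vabs_ge0.
rewrite -disj_xy; apply: vinf_glb; first exact: vinf_lel.
exact: vle_trans (vinf_ler _ _) le_wy.
Qed.

Lemma ddcomp1_self z : band1 z z.
Proof. by move=> a dz_a; apply: vdisjC; apply: dz_a. Qed.

Lemma ddcomp1_vlhd a b : band1 b a -> vlhd L a b.
Proof.
move=> a_in x x_in c dc_b; apply: x_in => _ ->.
by apply: vdisjC; apply: a_in.
Qed.

Lemma vlhd_ddcomp1 a b : vlhd L a b -> band1 b a.
Proof. by move=> lhd_ab; apply: lhd_ab; apply: ddcomp1_self. Qed.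

Lemma ddcomp1_disj_eq0 y1 y2 z :
  disj y1 y2 -> band1 y1 z -> band1 y2 z -> z = 0.
Proof.
move=> disj12 z_in1 z_in2; apply: vdisjxx; apply: z_in2 => _ ->.
by apply: z_in1 => _ ->; apply: vdisjC.
Qed.

Lemma vlhd_inf_abs x1 x2 : vlhd L (inf (abs x1) (abs x2)) x1.
Proof.
apply: ddcomp1_vlhd => c dc_x1; apply: vdisjC.
apply: vdisj_le (dc_x1 _ erefl); last exact: vinf_lel.
by apply: vinf_glb; apply: vabs_ge0.
Qed.

End VectorLattice.

Theorem theorem2p4 (R : realType) (X Y : lmodType R)
  (LX : vlattice X) (LY : vlattice Y)
  (archX : archimedean LX) (archY : archimedean LY)
  (T : {linear X -> Y}) (Tinj : injective T)
  (Tbeta : cond_beta LX LY T) :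
  forall x1 x2 : X, vdisj LY (T x1) (T x2) -> vdisj LX x1 x2.
Proof.
move=> x1 x2 disjT.
set w := vinf LX (vabs LX x1) (vabs LX x2).
have w_lhd1 : vlhd LX w x1 by apply: vlhd_inf_abs.
have w_lhd2 : vlhd LX w x2 by rewrite /w vinfC; apply: vlhd_inf_abs.
have Tw0 : T w = 0.
  apply: (ddcomp1_disj_eq0 disjT); apply: vlhd_ddcomp1; exact: Tbeta.
by apply: Tinj; rewrite Tw0 linear0.
Qed.
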